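(* Let $\mathcal O$ be the suboperad of $\mathrm{CNCB}$ generated by $a:=T_{bbb}$ and $w:=T_{bub}$. Then $\mathcal O$ admits the presentation with generators $a,w$ of arity $2$ and relations $$w\circ_1 w=w\circ_2 w,\qquad a\circ_1 w=a\circ_2 w.$$ That is, $\mathcal O$ is isomorphic, via the morphism sending the generators to $a$ and $w$, to the quotient of the free operad on two binary generators by the operadic congruence generated by these relations.
   Context: For $n\ge2$, a bicoloured noncrossing configuration (BNC) of size $n$ is a regular polygon with vertices $1,\dots,n+1$ clockwise, together with disjoint sets of blue and red arcs among the arcs $(i,j)$, $1\le i<j\le n+1$. The arcs $(i,i+1)$ are the edges ($i$th edge), $(1,n+1)$ is the base, and the others are diagonals. Coloured arcs are pairwise noncrossing ($(i,j),(k,l)$ cross iff $i<k<j<l$ or $k<i<l<j$), and red arcs are diagonals. There is one BNC of size $1$, a blue segment, which is the unit. The operad $\mathrm{CNCB}$ has the BNCs as elements (arity = size). Its composition $\mathfrak C\circ_i\mathfrak D$ ($\mathfrak C$ of size $n$, $\mathfrak D$ of size $m$) glues the base of $\mathfrak D$ on the $i$th edge of $\mathfrak C$. Arcs $(a,b)$ of $\mathfrak C$ become $(\sigma(a),\sigma(b))$ with $\sigma(v)=v$ for $v\le i$ and $v+m-1$ otherwise, and arcs $(a,b)$ of $\mathfrak D$ become $(a+i-1,b+i-1)$, keeping colours. The exception is the arc $(i,i+m)$, which is red if the $i$th edge of $\mathfrak C$ and the base of $\mathfrak D$ are both uncoloured, blue if both are blue, and uncoloured otherwise. For $x,y,z\in\{b,u\}$,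 $T_{xyz}$ denotes the BNC of size $2$ (a triangle with vertices $1,2,3$) whose first edge $(1,2)$ has colour $x$, whose base $(1,3)$ has colour $y$, and whose second edge $(2,3)$ has colour $z$, where $b$ = blue and $u$ = uncoloured. The suboperad generated by a set is the smallest suboperad containing it. *)

From mathcomp Require Import all_boot.
Set Implicit Arguments. Unset Strict Implicit. Unset Printing Implicit Defensive.

Inductive colour := Blue | Red | Unc.

Definition colour_eqb (x y : colour) : bool :=
  match x, y with
  | Blue, Blue | Red, Red | Unc, Unc => true
  | _, _ => false
  end.

(* A BNC of size n: vertices 1..n+1; [bcol C i j] is the colour of the arc
   (i,j).  Convention: bcol is [Unc] on every pair (i,j) that is not an arc
   1 <= i < j <= n+1, so that two BNCs are equal iff they have the same size
   and the same colouring of arcs. *)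
Record bnc := BNC { bsize : nat; bcol : nat -> nat -> colour }.

Definition arc_ok (n i j : nat) : bool := (1 <= i) && (i < j) && (j <= n.+1).

Definition crossing (i j k l : nat) : bool :=
  ((i < k) && (k < j) && (j < l)) || ((k < i) && (i < l) && (l < j)).

Definition is_diagonal (n i j : nat) : bool :=
  arc_ok n i j && (j != i.+1) && ~~ ((i == 1) && (j == n.+1)).

Definition is_BNC (C : bnc) : Prop :=
  let n := bsize C in let c := bcol C in
  1 <= n /\
  (forall i j, ~~ arc_ok n i j -> c i j = Unc) /\
  (n = 1 -> c 1 2 = Blue) /\
  (forall i j k l, c i j <> Unc -> c k l <> Unc -> ~~ crossing i j k l) /\
  (forall i j, c i j = Red -> is_diagonal n i j).

Definition bnc_unit : bnc :=
  BNC 1 (fun i j => if (i == 1) && (j == 2) then Blue else Unc).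

Definition glue_colour (x y : colour) : colour :=
  match x, y with
  | Unc, Unc => Red
  | Blue, Blue => Blue
  | _, _ => Unc
  end.

(* Partial composition C o_i D (meaningful for 1 <= i <= bsize C). *)
Definition bnc_comp (C : bnc) (i : nat) (D : bnc) : bnc :=
  let n := bsize C in let m := bsize D in
  (* inverse of sigma on the vertices outside the open interval (i, i+m) *)
  let unsig v := if v <= i then v else v - (m - 1) in
  let inside v := (i < v) && (v < i + m) in
  BNC (n + m - 1)
    (fun p q =>
       if (p == i) && (q == i + m) then
         glue_colour (bcol C i i.+1) (bcol D 1 m.+1)
       else if (i <= p) && (q <= i + m) then
         bcol D (p - i).+1 (q - i).+1
       else if inside p || inside q then Unc
       else bcol C (unsig p) (unsig q)).

(* T_xyz : first edge (1,2) colour x, base (1,3) colour y, second edge (2,3) colour z *)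
Definition T (x y z : colour) : bnc :=
  BNC 2 (fun i j =>
    if (i == 1) && (j == 2) then x
    else if (i == 1) && (j == 3) then y
    else if (i == 2) && (j == 3) then z
    else Unc).

Definition bnc_a : bnc := T Blue Blue Blue.
Definition bnc_w : bnc := T Blue Unc Blue.

Inductive in_O : bnc -> Prop :=
  | inO_unit : in_O bnc_unit
  | inO_a : in_O bnc_a
  | inO_w : in_O bnc_w
  | inO_comp C D i : in_O C -> in_O D -> 1 <= i <= bsize C ->
      in_O (bnc_comp C i D).

Inductive gen := GA | GW.

(* planar binary trees with internal nodes labelled by generators;
   arity = number of leaves; Leaf is the operad unit. *)
Inductive tree := Leaf | Node of gen & tree & tree.

Fixpoint arity (t : tree) : nat :=
  match t with
  | Leaf => 1
  | Node _ l r => arity l + arity r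
  end.

Fixpoint graft (t : tree) (i : nat) (s : tree) : tree :=
  match t with
  | Leaf => s
  | Node g l r =>
      if i <= arity l then Node g (graft l i s) r
      else Node g l (graft r (i - arity l) s)
  end.

Definition tgen (g : gen) : tree := Node g Leaf Leaf.

Inductive cong : tree -> tree -> Prop :=
  | cong_rel_w : cong (graft (tgen GW) 1 (tgen GW)) (graft (tgen GW) 2 (tgen GW))
  | cong_rel_a : cong (graft (tgen GA) 1 (tgen GW)) (graft (tgen GA) 2 (tgen GW))
  | cong_refl t : cong t t
  | cong_sym t t' : cong t t' -> cong t' t
  | cong_trans t t' t'' : cong t t' -> cong t' t'' -> cong t t''
  | cong_comp t t' s s' i : cong t t' -> cong s s' -> 1 <= i <= arity t ->
      cong (graft t i s) (graft t' i s').

(* The operad morphism from the free operad to CNCB sending GA to a and GW to w: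
   Node g l r = (g o_2 r) o_1 l in the free operad. *)
Definition gen_val (g : gen) : bnc := match g with GA => bnc_a | GW => bnc_w end.

Fixpoint ev (t : tree) : bnc :=
  match t with
  | Leaf => bnc_unit
  | Node g l r => bnc_comp (bnc_comp (gen_val g) 2 (ev r)) 1 (ev l)
  end.

(* Every configuration built from a = T_bbb and w = T_bub has all its edges
   blue and no red arc, and on such configurations composition of BNCs is
   unital, associative and satisfies the parallel-composition axiom, so the
   evaluation of trees is an operad morphism whose image is O.  Both relations
   hold in CNCB, so congruent trees have equal values.  Conversely, the
   relations orient into the rewriting rule g(w(x, y), z) -> g(x, w(y, z)),
   whose normal forms are the trees in which no left child is a w-node.  Such a
   tree is recovered from its value: the colour of the base gives the root
   label, and the arity of the left subtree is k - 1 for the largest k <= n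
   with (1, k) blue, because the base of a normal left subtree is blue. *)

From mathcomp Require Import all_boot zify.
From Stdlib Require Import FunctionalExtensionality.
Set Implicit Arguments. Unset Strict Implicit. Unset Printing Implicit Defensive.

Record blue_edged (C : bnc) : Prop := BlueEdged {
  bsize_gt0 : 0 < bsize C;
  bcol_out : forall p q, ~~ arc_ok (bsize C) p q -> bcol C p q = Unc;
  bcol_nonred : forall p q, bcol C p q <> Red;
  bcol_edge : forall p, 1 <= p <= bsize C -> bcol C p p.+1 = Blue }.

Lemma bnc_ext C D :
  bsize C = bsize D -> (forall p q, bcol C p q = bcol D p q) -> C = D.
Proof.
case: C => n c; case: D => n' c' /= -> H; congr BNC.
by apply: functional_extensionality => p; apply: functional_extensionality => q.
Qed.

(* Since the i-th edge of C is blue and the base of D is not red, the glued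
   arc needs no special case. *)
Lemma bcol_comp C D i : blue_edged C -> blue_edged D -> 1 <= i <= bsize C ->
  forall p q, bcol (bnc_comp C i D) p q =
  if (i <= p) && (q <= i + bsize D) then bcol D (p - i).+1 (q - i).+1
  else if ((i < p) && (p < i + bsize D)) || ((i < q) && (q < i + bsize D)) then Unc
  else bcol C (if p <= i then p else p - (bsize D - 1))
              (if q <= i then q else q - (bsize D - 1)).
Proof.
move=> HC HD Hi p q; rewrite /bnc_comp /=.
case: ifP => [/andP [/eqP -> /eqP ->]|_] //.
rewrite (bcol_edge HC Hi) leqnn leqnn subnn addKn.
by case E: (bcol D 1 (bsize D).+1) => //; case: (bcol_nonred HD E).
Qed.

(* Identities between compositions are checked pointwise: [split_conditions]
   case-splits on the innermost boolean conditions and discards the branches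
   that are arithmetically impossible; [close_colour] then matches the colours
   that remain. *)
Ltac leftmost_atom b := lazymatch b with
 | ?x && _ => leftmost_atom x | ?x || _ => leftmost_atom x
 | ~~ ?x => leftmost_atom x | _ => constr:(b) end.
Ltac innermost_cond b := let a := leftmost_atom b in
  lazymatch a with
  | context[if ?c then _ else _] => innermost_cond c
  | _ => constr:(a) end.
Ltac simplb := rewrite ?andTb ?andFb ?orTb ?orFb ?andbT ?andbF ?orbT ?orbF.
Ltac clear_for_lia := repeat match goal with
 | H: context[if _ then _ else _] |- _ => clear H
 | H: blue_edged _ |- _ => clear H end.
Ltac split_conditions := repeat (match goal with
 | |- context[if ?b then _ else _] => let a := innermost_cond b in
      let E := fresh "E" in case E: a; simplb
 | H: context[if ?b then _ else _] |- _ => let a := innermost_cond b in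
      let E := fresh "E" in move: H; case E: a; simplb => H
end; try (exfalso; clear_for_lia; lia)).
Ltac outside_arc := match goal with |- context[bcol ?X ?x ?y] =>
  rewrite (@bcol_out X _ x y); [| by assumption | by unfold arc_ok in *; lia] end.
Ltac blue_edge := match goal with |- bcol ?X ?x ?y = Blue =>
  (try (rewrite (_ : y = x.+1); last lia)); apply: bcol_edge; [by assumption | lia] end.
Ltac same_arc := match goal with |- bcol ?X ?x ?y = bcol ?X ?x' ?y' =>
  case: (boolP (arc_ok (bsize X) x y)) => ?;
  [ f_equal; unfold arc_ok in *; lia | repeat outside_arc; done ] end.
Ltac close_colour := solve [done | exfalso; lia | f_equal; lia
  | repeat outside_arc; done | blue_edge | symmetry; blue_edge | same_arc ].

Lemma blue_edged_comp C D i :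
  blue_edged C -> blue_edged D -> 1 <= i <= bsize C -> blue_edged (bnc_comp C i D).
Proof.
move=> HC HD Hi; have Hc := bsize_gt0 HC; have Hd := bsize_gt0 HD.
split; [rewrite /=; lia | move=> p q | move=> p q | move=> p].
- by rewrite bcol_comp // /arc_ok /= => Hpq; split_conditions; close_colour.
- by rewrite bcol_comp //; split_conditions => //; exact: bcol_nonred.
- by rewrite bcol_comp //= => Hp; split_conditions; close_colour.
Qed.

Lemma blue_edged_unit : blue_edged bnc_unit.
Proof.
split=> //= [p q|p q|p Hp]; first by rewrite /arc_ok; split_conditions => //; lia.
- by case: ifP.
- by have -> : p = 1 by lia.
Qed.

Lemma blue_edged_T y : y <> Red -> blue_edged (T Blue y Blue).
Proof.
move=> Hy; split=> //= [p q|p q|p Hp]; first by rewrite /arc_ok; split_conditions => //; lia.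
- by split_conditions.
- by split_conditions => //; lia.
Qed.

Lemma blue_edged_gen g : blue_edged (gen_val g).
Proof. by case: g; apply: blue_edged_T. Qed.

Lemma bsize_gen g : bsize (gen_val g) = 2.
Proof. by case: g. Qed.

Lemma bnc_comp_unitl D : blue_edged D -> bnc_comp bnc_unit 1 D = D.
Proof.
move=> HD; have Hd := bsize_gt0 HD.
apply: bnc_ext => [/=|p q]; first lia.
rewrite bcol_comp //; last exact: blue_edged_unit.
by rewrite /=; split_conditions; close_colour.
Qed.

Lemma bnc_comp_unitr C i : blue_edged C -> 1 <= i <= bsize C -> bnc_comp C i bnc_unit = C.
Proof.
move=> HC Hi; have Hc := bsize_gt0 HC.
apply: bnc_ext => [/=|p q]; first lia.
rewrite bcol_comp //; last exact: blue_edged_unit.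
by rewrite /=; split_conditions; close_colour.
Qed.

Lemma bnc_comp_assoc C D E i j :
  blue_edged C -> blue_edged D -> blue_edged E ->
  1 <= i <= bsize C -> 1 <= j <= bsize D ->
  bnc_comp (bnc_comp C i D) (i + j - 1) E = bnc_comp C i (bnc_comp D j E).
Proof.
move=> HC HD HE Hi Hj.
have Hc := bsize_gt0 HC; have Hd := bsize_gt0 HD; have He := bsize_gt0 HE.
have HCD := blue_edged_comp HC HD Hi; have HDE := blue_edged_comp HD HE Hj.
apply: bnc_ext => [/=|p q]; first lia.
rewrite (bcol_comp HCD HE); last by rewrite /=; lia.
rewrite (bcol_comp HC HDE Hi) !(bcol_comp HC HD Hi) !(bcol_comp HD HE Hj) /=.
by split_conditions; close_colour.
Qed.

Lemma bnc_comp_commute C D E i j :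
  blue_edged C -> blue_edged D -> blue_edged E -> 1 <= i < j -> j <= bsize C ->
  bnc_comp (bnc_comp C i D) (j + bsize D - 1) E = bnc_comp (bnc_comp C j E) i D.
Proof.
move=> HC HD HE Hij Hj.
have Hc := bsize_gt0 HC; have Hd := bsize_gt0 HD; have He := bsize_gt0 HE.
have Hi' : 1 <= i <= bsize C by lia.
have Hj' : 1 <= j <= bsize C by lia.
have HCD := blue_edged_comp HC HD Hi'; have HCE := blue_edged_comp HC HE Hj'.
apply: bnc_ext => [/=|p q]; first lia.
rewrite (bcol_comp HCD HE); last by rewrite /=; lia.
rewrite (bcol_comp HCE HD); last by rewrite /=; lia.
rewrite !(bcol_comp HC HD Hi') !(bcol_comp HC HE Hj') /=.
by split_conditions; close_colour.
Qed.

Lemma arity_gt0 t : 0 < arity t.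
Proof. by elim: t => //= g l IHl r _; rewrite addn_gt0 IHl. Qed.

Lemma bsize_ev t : bsize (ev t) = arity t.
Proof.
elim: t => //= g l IHl r IHr; rewrite bsize_gen IHl IHr.
by have := arity_gt0 l; have := arity_gt0 r; lia.
Qed.

Lemma blue_edged_ev t : blue_edged (ev t).
Proof.
elim: t => [|g l Hl r Hr]; first exact: blue_edged_unit.
apply: blue_edged_comp Hl _; last by rewrite /= bsize_gen bsize_ev; lia.
by apply: blue_edged_comp (blue_edged_gen g) Hr _; rewrite bsize_gen.
Qed.

Lemma ev_tgen g : ev (tgen g) = gen_val g.
Proof.
have Hg := blue_edged_gen g.
by rewrite /= !bnc_comp_unitr // bsize_gen.
Qed.

Lemma ev_graft t i s : 1 <= i <= arity t -> ev (graft t i s) = bnc_comp (ev t) i (ev s).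
Proof.
elim: t i => [|g l IHl r IHr] i /= Hi.
  have -> : i = 1 by lia.
  by rewrite bnc_comp_unitl //; apply: blue_edged_ev.
have Hg := blue_edged_gen g.
have Hl := blue_edged_ev l; have Hr := blue_edged_ev r; have Hs := blue_edged_ev s.
have Hl0 := arity_gt0 l; have Hr0 := arity_gt0 r.
have H2 : 1 <= 2 <= bsize (gen_val g) by rewrite bsize_gen.
have Hgr := blue_edged_comp Hg Hr H2.
have H1 : 1 <= 1 <= bsize (bnc_comp (gen_val g) 2 (ev r)).
  by rewrite /= bsize_ev bsize_gen; lia.
case: ifP => Hil /=.
  rewrite IHl; last lia.
  have Hj : 1 <= i <= bsize (ev l) by rewrite bsize_ev; lia.
  by rewrite -(bnc_comp_assoc Hgr Hl Hs H1 Hj) add1n subn1.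
rewrite IHr; last lia.
have Hir : 1 <= i - arity l <= bsize (ev r) by rewrite bsize_ev; lia.
rewrite -(bnc_comp_assoc Hg Hr Hs H2 Hir).
rewrite -(bnc_comp_commute Hgr Hl Hs (i := 1)); last 2 first.
- lia.
- by rewrite /= bsize_ev bsize_gen; lia.
by congr bnc_comp; rewrite bsize_ev; lia.
Qed.

Lemma bcol_ev_node g l r p q : bcol (ev (Node g l r)) p q =
  if (p == 1) && (q == arity l + arity r + 1) then (if g is GA then Blue else Unc)
  else if q <= arity l + 1 then bcol (ev l) p q
  else if arity l + 1 <= p then bcol (ev r) (p - arity l) (q - arity l)
  else Unc.
Proof.
have Hg := blue_edged_gen g.
have Hl := blue_edged_ev l; have Hr := blue_edged_ev r.
have Sl := bsize_ev l; have Sr := bsize_ev r.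
have Hl0 := arity_gt0 l; have Hr0 := arity_gt0 r.
have H2 : 1 <= 2 <= bsize (gen_val g) by rewrite bsize_gen.
have Hgr := blue_edged_comp Hg Hr H2.
have H1 : 1 <= 1 <= bsize (bnc_comp (gen_val g) 2 (ev r)).
  by rewrite /= bsize_ev bsize_gen; lia.
rewrite [ev _]/= (bcol_comp Hgr Hl H1) !(bcol_comp Hg Hr H2) !bsize_ev ?bsize_gen.
clear Hgr H1 H2.
by case: g Hg => Hg; rewrite /gen_val /bnc_a /bnc_w /T /=; split_conditions; close_colour.
Qed.

Lemma cong_node g l l' r r' : cong l l' -> cong r r' -> cong (Node g l r) (Node g l' r').
Proof.
move=> Hl Hr.
apply: (cong_comp (i := 1) (cong_comp (i := 2) (cong_refl (tgen g)) Hr isT) Hl).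
by rewrite /= addn_gt0 arity_gt0.
Qed.

Lemma cong_rotate g x y z : cong (Node g (Node GW x y) z) (Node g x (Node GW y z)).
Proof.
have Hrel : cong (Node g (tgen GW) Leaf) (Node g Leaf (tgen GW)).
  by case: g; [exact: cong_rel_a | exact: cong_rel_w].
have Hz := cong_comp (i := 3) Hrel (cong_refl z) isT.
have Hy := cong_comp (i := 2) Hz (cong_refl y).
by apply: (cong_comp (i := 1) (Hy _) (cong_refl x)); rewrite /= ?arity_gt0.
Qed.

Definition not_wnode (t : tree) : bool := if t is Node GW _ _ then false else true.

Fixpoint normal (t : tree) : bool :=
  if t is Node _ l r then [&& normal l, normal r & not_wnode l] else true.

Lemma normal_node g l r : normal l -> normal r ->
  exists2 t, normal t & cong (Node g l r) t.
Proof.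
elim: l g r => [|[] x IHx y IHy] g r /= Nl Nr.
- by exists (Node g Leaf r); [rewrite /= Nr | exact: cong_refl].
- by exists (Node g (Node GA x y) r); [rewrite /= Nl Nr | exact: cong_refl].
case/andP: Nl => Nx /andP [Ny _].
have [u Nu Cu] := IHy GW r Ny Nr.
have [t Nt Ct] := IHx g u Nx Nu.
exists t => //.
apply: cong_trans (cong_rotate g x y r) (cong_trans _ Ct).
exact: cong_node (cong_refl x) Cu.
Qed.

Lemma normal_form t : exists2 t', normal t' & cong t t'.
Proof.
elim: t => [|g l [l' Nl Cl] r [r' Nr Cr]]; first by exists Leaf; last exact: cong_refl.
have [t' Nt Ct] := normal_node g Nl Nr.
by exists t' => //; exact: cong_trans (cong_node g Cl Cr) Ct.
Qed.

Lemma bcol_ev_base l : not_wnode l -> bcol (ev l) 1 (arity l + 1) = Blue.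
Proof. by case: l => [|[] x y] //; rewrite bcol_ev_node !eqxx. Qed.

Lemma ev_node_arity_left g l r g' l' r' :
  not_wnode l -> not_wnode l' -> ev (Node g l r) = ev (Node g' l' r') ->
  arity l = arity l'.
Proof.
move=> Wl Wl' E.
have Hl := blue_edged_ev l.
have Hl0 := arity_gt0 l; have Hr0 := arity_gt0 r; have Hr0' := arity_gt0 r'.
have Hs := congr1 bsize E; rewrite !bsize_ev /= in Hs.
wlog lt_ll' : g g' l r l' r' Wl Wl' Hl Hl0 Hr0 Hr0' E Hs / arity l < arity l'.
  move=> Hwlog; case: (ltngtP (arity l) (arity l')) => // Hlt.
  - exact: (Hwlog g g' l r l' r').
  - by symmetry; apply: (Hwlog g' g l' r' l r) => //;
      [exact: blue_edged_ev | exact: arity_gt0].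
exfalso; have : bcol (ev (Node g l r)) 1 (arity l' + 1) =
                bcol (ev (Node g' l' r')) 1 (arity l' + 1) by rewrite E.
rewrite !bcol_ev_node (bcol_ev_base Wl').
split_conditions; rewrite ?bcol_out ?bsize_ev // /arc_ok; lia.
Qed.

Lemma ev_inj_normal t t' : normal t -> normal t' -> ev t = ev t' -> t = t'.
Proof.
elim: t t' => [|g l IHl r IHr] [|g' l' r'] // Nt Nt' E;
  have := congr1 bsize E; rewrite !bsize_ev /=.
- by have := arity_gt0 l'; have := arity_gt0 r'; lia.
- by have := arity_gt0 l; have := arity_gt0 r; lia.
move=> Hs; case/and3P: Nt => Nl Nr Wl; case/and3P: Nt' => Nl' Nr' Wl'.
have Ea := ev_node_arity_left Wl Wl' E.
have Ecol p q : bcol (ev (Node g l r)) p q = bcol (ev (Node g' l' r')) p q.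
  by rewrite E.
have Hl := blue_edged_ev l; have Hl' := blue_edged_ev l'.
have Hr := blue_edged_ev r; have Hr' := blue_edged_ev r'.
have Hl0 := arity_gt0 l; have Hr0 := arity_gt0 r.
have -> : g = g'.
  move: (Ecol 1 (arity l + arity r + 1)); rewrite !bcol_ev_node Hs !eqxx /=.
  by case: g {IHl IHr E Ecol}; case: g'.
congr Node; [apply: IHl | apply: IHr] => //; apply: bnc_ext => [|p q].
- by rewrite !bsize_ev.
- case: (boolP (arc_ok (arity l) p q)) => Ha; last first.
    by rewrite !bcol_out ?bsize_ev -?Ea.
  move: (Ecol p q); rewrite !bcol_ev_node -Ea; move: Ha; rewrite /arc_ok => Ha.
  by split_conditions.
- by rewrite !bsize_ev; lia.
- case: (boolP (arc_ok (arity r) p q)) => Ha; last first.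
    by rewrite !bcol_out ?bsize_ev // (_ : arity r' = arity r) //; lia.
  move: (Ecol (p + arity l) (q + arity l)); rewrite !bcol_ev_node -Ea !addnK.
  by move: Ha; rewrite /arc_ok => Ha; split_conditions.
Qed.

Lemma ev_gen_comp1w_comp2w g :
  bnc_comp (gen_val g) 1 bnc_w = bnc_comp (gen_val g) 2 bnc_w.
Proof.
have Hw := blue_edged_gen GW; have Hg := blue_edged_gen g.
apply: bnc_ext => [|p q]; first by rewrite /= bsize_gen.
rewrite !(bcol_comp Hg Hw) ?bsize_gen //.
by case: g Hg => Hg; rewrite /gen_val /bnc_a /bnc_w /T /=; split_conditions; close_colour.
Qed.

Lemma ev_cong t t' : cong t t' -> ev t = ev t'.
Proof.
elim=> {t t'} [||//|t t' _ -> //|t t' t'' _ -> _ -> //|t t' s s' i _ Et _ Es Hi].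
- rewrite (@ev_graft (tgen GW) 1 _ isT) (@ev_graft (tgen GW) 2 _ isT) !ev_tgen.
  exact: ev_gen_comp1w_comp2w.
- rewrite (@ev_graft (tgen GA) 1 _ isT) (@ev_graft (tgen GA) 2 _ isT) !ev_tgen.
  exact: ev_gen_comp1w_comp2w.
have Hi' : 1 <= i <= arity t' by rewrite -bsize_ev -Et bsize_ev.
by rewrite !ev_graft // Et Es.
Qed.

Lemma cong_ev t t' : ev t = ev t' -> cong t t'.
Proof.
move=> E; have [n Nn Cn] := normal_form t; have [n' Nn' Cn'] := normal_form t'.
have Enn' : n = n'.
  by apply: ev_inj_normal Nn Nn' _; rewrite -(ev_cong Cn) -(ev_cong Cn').
by apply: cong_trans Cn _; rewrite Enn'; exact: cong_sym.
Qed.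

Lemma in_O_ev t : in_O (ev t).
Proof.
elim: t => [|g l IHl r IHr]; first exact: inO_unit.
apply: inO_comp IHl _; last by rewrite /= bsize_gen bsize_ev; have := arity_gt0 r; lia.
by apply: inO_comp IHr _; [case: g; constructor | rewrite bsize_gen].
Qed.

Lemma in_O_image C : in_O C -> exists t, ev t = C.
Proof.
elim=> [|||_ _ i _ [t <-] _ [s <-] Hi].
- by exists Leaf.
- by exists (tgen GA); rewrite ev_tgen.
- by exists (tgen GW); rewrite ev_tgen.
by exists (graft t i s); rewrite ev_graft // -bsize_ev.
Qed.

Theorem theorem3p27 :
  (* ev is an operad morphism from the free operad to CNCB *)
  (forall t i s, 1 <= i <= arity t -> ev (graft t i s) = bnc_comp (ev t) i (ev s)) /\
  (* its image is exactly the suboperad O generated by a and w *)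
  (forall C : bnc, in_O C <-> exists t, ev t = C) /\
  (* its kernel is exactly the operadic congruence generated by the relations *)
  (forall t t' : tree, ev t = ev t' <-> cong t t').
Proof.
split; first exact: ev_graft.
split=> [C|t t']; split; [exact: in_O_image | by case=> t <-; exact: in_O_ev | |].
- exact: cong_ev.
- exact: ev_cong.
Qed.
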